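(* Assume that the lsc function $f:\mathbb{R}^n\to(-\infty,\infty]$ is prox-regular and subdifferentially continuous at $\bar x\in\operatorname{dom} f$ for the subgradient $\bar x^*\in\partial f(\bar x)$. Then there is a neighborhood $U\times V$ of $(\bar x,\bar x^* )$ such that for every $(x,x^* )\in \operatorname{gph}\partial f\cap (U\times V)$ the function $f$ is prox-regular and subdifferentially continuous at $x$ for $x^*$ and \begin{gather*}T_{\operatorname{gph} \partial f}^f(x,x^* )= T_{\operatorname{gph} \partial f}(x,x^* ),\ \widehat N_{\operatorname{gph} \partial f}^f(x,x^* )= \widehat N_{\operatorname{gph} \partial f}(x,x^* ),\ N_{\operatorname{gph} \partial f}^f(x,x^* )= N_{\operatorname{gph} \partial f}(x,x^* ),\\ D_f(\partial f)(x,x^* )=D(\partial f)(x,x^* ),\ \widehat D^*_f(\partial f)(x,x^* )=\widehat D^*(\partial f)(x,x^* ),\ D^*_f(\partial f)(x,x^* )=\widehat D^*(\partial f)(x,x^* ),\\ \mathcal{S}_f(\partial f)(x,x^* )=\mathcal{S}(\partial f)(x,x^* ),\ \mathcal{S}^*_f(\partial f)(x,x^* )=\mathcal{S}^*(\partial f)(x,x^* ). \end{gather*}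
   Context: $\partial f$ denotes the limiting subdifferential, $\operatorname{gph}$ the graph. $f$ is prox-regular at $\bar x$ for $\bar x^*$ if $f$ is finite at $\bar x$, $\bar x^*\in\partial f(\bar x)$, and there exist $\epsilon>0$, $r\ge 0$ with $f(x')\ge f(x)+\langle x^*,x'-x\rangle-\frac r2\|x'-x\|^2$ whenever $\|x'-\bar x\|<\epsilon$, $(x,x^* )\in\operatorname{gph}\partial f$, $\|x-\bar x\|<\epsilon$, $\|x^*-\bar x^*\|<\epsilon$, $f(x)<f(\bar x)+\epsilon$. $f$ is subdifferentially continuous at $\bar x$ for $\bar x^*$ if $(x_k,x_k^* )\to(\bar x,\bar x^* )$ with $(x_k,x_k^* )\in\operatorname{gph}\partial f$ implies $f(x_k)\to f(\bar x)$. Write $(x_k,x_k^* )\to_f(\bar x,\bar x^* )$ ($f$-attentive convergence in $\operatorname{gph}\partial f$) if $(x_k,x_k^* )\in\operatorname{gph}\partial f$, $(x_k,x_k^* )\to(\bar x,\bar x^* )$ and $f(x_k)\to f(\bar x)$. $T_\Omega$, $\widehat N_\Omega=(T_\Omega)^\circ$, $N_\Omega$ are the tangent, regular normal and limiting normal cones; $D$, $\widehat D^*$, $D^*$ the graphical derivative, regular and limiting coderivative ($\operatorname{gph}\widehat D^*F(\bar x,\bar y)=\{(y^*,x^* ): (x^*,-y^* )\in\widehat N_{\operatorname{gph}F}(\bar x,\bar y)\}$, similarly $D^*$ with $N$). The $f$-attentive versions are defined by replacing ordinary convergence in $\operatorname{gph}\partial f$ by $f$-attentive convergence: $T^f_{\operatorname{gph}\partial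 f}(\bar x,\bar x^* )$ is the set of limits $\lim_k ((x_k,x_k^* )-(\bar x,\bar x^* ))/t_k$ with $t_k\downarrow0$, $(x_k,x_k^* )\to_f(\bar x,\bar x^* )$; $\widehat N^f_{\operatorname{gph}\partial f}:=(T^f_{\operatorname{gph}\partial f})^\circ$; $N^f_{\operatorname{gph}\partial f}(\bar x,\bar x^* )$ is the outer limit of $\widehat N^f_{\operatorname{gph}\partial f}(x,x^* )$ as $(x,x^* )\to_f(\bar x,\bar x^* )$; $D_f(\partial f)$, $\widehat D^*_f(\partial f)$, $D^*_f(\partial f)$ are built from these cones as the ordinary ones. With $\mathcal Z_{nn}$ the space of $n$-dimensional subspaces of $\mathbb R^n\times\mathbb R^n$ with metric $d(L_1,L_2)=\|P_{L_1}-P_{L_2}\|$ (orthogonal projections), the SC derivative $\mathcal S(\partial f)(\bar x,\bar x^* )$ is the set of $L\in\mathcal Z_{nn}$ that are limits of $T_{\operatorname{gph}\partial f}(x_k,x_k^* )\in\mathcal Z_{nn}$ along $(x_k,x_k^* )\to(\bar x,\bar x^* )$ in $\operatorname{gph}\partial f$; the $f$-attentive SC derivative $\mathcal S_f(\partial f)(\bar x,\bar x^* )$ is the set of limits of $T^f_{\operatorname{gph}\partial f}(x_k,x_k^* )\in\mathcal Z_{nn}$ along $(x_k,x_k^* )\to_f(\bar x,\bar x^* )$. Adjoint versions: $\mathcal S^*=\{L^*: L\in\mathcal S\}$, $\mathcal S^*_f=\{L^*:L\in\mathcal S_f\}$, where $L^*=\{(v^*,u^* ): (u^*,-v^* )\in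 L^\perp\}$. *)

From HB Require Import structures.
From mathcomp Require Import all_boot all_order all_algebra.
From mathcomp Require Import all_classical all_reals all_analysis.
Set Implicit Arguments. Unset Strict Implicit. Unset Printing Implicit Defensive.
Import Order.TTheory GRing.Theory Num.Theory.
Import numFieldNormedType.Exports.
Local Open Scope classical_set_scope.
Local Open Scope ring_scope.

Section Defs.
Context {R : realType} {n : nat}.
Local Notation V := 'rV[R]_n.
Local Notation Z := (V * V)%type.

Definition dotv (u v : V) : R := \sum_(i < n) u ord0 i * v ord0 i.
Definition normv (u : V) : R := Num.sqrt (dotv u u).
Definition dotp (z w : Z) : R := dotv z.1 w.1 + dotv z.2 w.2.
Definition normp (z : Z) : R := Num.sqrt (dotp z z).
Definition subp (z w : Z) : Z := (z.1 - w.1, z.2 - w.2).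

Definition regsubdiff (f : V -> \bar R) (x xs : V) : Prop :=
  f x \is a fin_num /\
  forall e : R, 0 < e -> exists2 d : R, 0 < d &
    forall y, normv (y - x) < d ->
      ((fine (f x) + dotv xs (y - x) - e * normv (y - x))%:E <= f y)%E.

Definition subdiff (f : V -> \bar R) (x xs : V) : Prop :=
  f x \is a fin_num /\
  exists (xk xsk : nat -> V),
    (forall k, regsubdiff f (xk k) (xsk k)) /\
    xk @ \oo --> x /\
    (fun k => f (xk k)) @ \oo --> f x /\
    xsk @ \oo --> xs.

Definition gph (f : V -> \bar R) : set Z := [set z | subdiff f z.1 z.2].

Definition gconv (f : V -> \bar R) (zk : nat -> Z) (z : Z) : Prop :=
  (forall k, gph f (zk k)) /\
  (fun k => (zk k).1) @ \oo --> z.1 /\ (fun k => (zk k).2) @ \oo --> z.2.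

Definition fconv (f : V -> \bar R) (zk : nat -> Z) (z : Z) : Prop :=
  gconv f zk z /\ (fun k => f (zk k).1) @ \oo --> f z.1.

(* Cones built from a convergence mode Conv (gconv f or fconv f). *)
Definition tcone (Conv : (nat -> Z) -> Z -> Prop) (z : Z) : set Z :=
  [set w | exists (zk : nat -> Z) (tk : nat -> R),
     Conv zk z /\ (forall k, 0 < tk k) /\ tk @ \oo --> (0 : R) /\
     (fun k => (tk k)^-1 *: ((zk k).1 - z.1)) @ \oo --> w.1 /\
     (fun k => (tk k)^-1 *: ((zk k).2 - z.2)) @ \oo --> w.2].

Definition polar (K : set Z) : set Z := [set v | forall w, K w -> dotp v w <= 0].

Definition rncone (Conv : (nat -> Z) -> Z -> Prop) (z : Z) : set Z :=
  polar (tcone Conv z).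

Definition lncone (Conv : (nat -> Z) -> Z -> Prop) (z : Z) : set Z :=
  [set v | exists (zk vk : nat -> Z),
     Conv zk z /\ (forall k, rncone Conv (zk k) (vk k)) /\
     (fun k => (vk k).1) @ \oo --> v.1 /\ (fun k => (vk k).2) @ \oo --> v.2].

Definition gderiv Conv (z : Z) (u : V) : set V := [set v | tcone Conv z (u, v)].
Definition rcoderiv Conv (z : Z) (ys : V) : set V := [set xs | rncone Conv z (xs, - ys)].
Definition lcoderiv Conv (z : Z) (ys : V) : set V := [set xs | lncone Conv z (xs, - ys)].

Definition isZnn (L : set Z) : Prop :=
  exists b : 'I_n -> Z,
    (forall c : 'I_n -> R,
        \sum_(i < n) c i *: (b i).1 = 0 -> \sum_(i < n) c i *: (b i).2 = 0 ->
        forall i, c i = 0) /\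
    L = [set z | exists c : 'I_n -> R,
                   z = (\sum_(i < n) c i *: (b i).1, \sum_(i < n) c i *: (b i).2)].

Definition orth_proj (L : set Z) (P : Z -> Z) : Prop :=
  forall z, L (P z) /\ forall w, L w -> dotp (subp z (P z)) w = 0.

(* convergence in Z_nn for the metric d(L1,L2) = ||P_L1 - P_L2|| (operator norm) *)
Definition Zconv (Lk : nat -> set Z) (L : set Z) : Prop :=
  exists (Pk : nat -> Z -> Z) (P : Z -> Z),
    (forall k, orth_proj (Lk k) (Pk k)) /\ orth_proj L P /\
    forall e : R, 0 < e -> exists N : nat, forall k, (N <= k)%N ->
      forall z, normp z <= 1 -> normp (subp (Pk k z) (P z)) <= e.

Definition SCderiv Conv (z : Z) : set (set Z) :=
  [set L | isZnn L /\ exists zk : nat -> Z,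
     Conv zk z /\ (forall k, isZnn (tcone Conv (zk k))) /\
     Zconv (fun k => tcone Conv (zk k)) L].

Definition adjoint (L : set Z) : set Z :=
  [set z | forall w, L w -> dotp (z.2, - z.1) w = 0].

Definition SCstar Conv (z : Z) : set (set Z) :=
  [set Ls | exists L, SCderiv Conv z L /\ Ls = adjoint L].

Definition prox_regular (f : V -> \bar R) (xb xbs : V) : Prop :=
  f xb \is a fin_num /\ subdiff f xb xbs /\
  exists (e r : R), 0 < e /\ 0 <= r /\
    forall x' x xs, normv (x' - xb) < e -> subdiff f x xs ->
      normv (x - xb) < e -> normv (xs - xbs) < e -> (f x < f xb + e%:E)%E ->
      ((fine (f x) + dotv xs (x' - x) - r / 2 * normv (x' - x) ^+ 2)%:E <= f x')%E.

Definition subdiff_continuous (f : V -> \bar R) (xb xbs : V) : Prop :=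
  forall zk : nat -> Z, gconv f zk (xb, xbs) -> (fun k => f (zk k).1) @ \oo --> f xb.

End Defs.

From HB Require Import structures.
From mathcomp Require Import all_boot all_order all_algebra.
From mathcomp Require Import all_classical all_reals all_analysis.
From mathcomp Require Import lra.
Import Order.TTheory GRing.Theory Num.Theory.
Import numFieldNormedType.Exports.
Set Implicit Arguments. Unset Strict Implicit. Unset Printing Implicit Defensive.
Local Open Scope classical_set_scope.
Local Open Scope ring_scope.

(* Subdifferential continuity at (xb, xbs) keeps f below f(xb) + e on the graph
   of the subdifferential near (xb, xbs), so there the level condition of
   prox-regularity is automatic and the prox-regularity inequality holds for
   every pair of nearby graph points.  Applied to (x_k, x_k^* ) and (x, x^* ) in
   both directions it squeezes f(x_k) between two quantities tending to f(x):
   f is prox-regular and subdifferentially continuous at every nearby graph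
   point, where ordinary and f-attentive convergence in the graph therefore
   coincide.  A sequence converging to such a point eventually stays in the
   neighbourhood, so the tangent cones agree along it, and so does everything
   built from them. *)

Section EuclideanNorm.
Context {R : realType} {n : nat}.
Local Notation V := 'rV[R]_n.

Lemma dotv_ge0 (u : V) : 0 <= dotv u u.
Proof. by apply: sumr_ge0 => i _; rewrite -expr2 sqr_ge0. Qed.

Lemma normv_ge0 (u : V) : 0 <= normv u.
Proof. exact: sqrtr_ge0. Qed.

Lemma normv_sqr (u : V) : normv u ^+ 2 = dotv u u.
Proof. by rewrite sqr_sqrtr // dotv_ge0. Qed.

Lemma dotv0r (u : V) : dotv u 0 = 0.
Proof. by rewrite /dotv big1 // => i _; rewrite mxE mulr0. Qed.

Lemma normv0 : normv (0 : V) = 0.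
Proof. by rewrite /normv dotv0r sqrtr0. Qed.

Lemma normv_entry_le (u : V) i : `|u ord0 i| <= normv u.
Proof.
rewrite -sqrtr_sqr ler_sqrt ?dotv_ge0 // /dotv (bigD1 i) //= -expr2 lerDl.
by apply: sumr_ge0 => j _; rewrite -expr2 sqr_ge0.
Qed.

Lemma normvD_lt (a b : V) t : normv a < t -> normv b < t -> normv (a + b) < 2 * t.
Proof.
move=> ha hb.
have sqr_normD_le : dotv (a + b) (a + b) <= 2 * dotv a a + 2 * dotv b b.
  rewrite /dotv !mulr_sumr -big_split /=; apply: ler_sum => i _; rewrite !mxE.
  have := sqr_ge0 (a ord0 i - b ord0 i); nra.
move: sqr_normD_le; rewrite -!normv_sqr.
have := normv_ge0 a; have := normv_ge0 b; have := normv_ge0 (a + b); nra.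
Qed.

Lemma normvB_lt_half (a b c : V) t :
  normv (a - b) < t / 2 -> normv (b - c) < t / 2 -> normv (a - c) < t.
Proof.
move=> hab hbc; have := normvD_lt hab hbc.
by rewrite addrA subrK mulrC divfK // pnatr_eq0.
Qed.

Section Limits.
Context {T : Type} (F : set_system T) {FF : Filter F}.

Lemma cvg_entry (a : T -> V) (a0 : V) i :
  a @ F --> a0 -> (fun t => a t ord0 i) @ F --> a0 ord0 i.
Proof.
move=> /cvgrPdist_lt cvg_a; apply/cvgrPdist_lt => eps eps0.
apply: filterS (cvg_a eps eps0) => t; apply: le_lt_trans.
have -> : a0 ord0 i - a t ord0 i = (a0 - a t) ord0 i by rewrite !mxE.
rewrite -[`|_ - _|]/(mx_norm _) mx_normrE.
by apply/bigmax_geP; right; exists (ord0, i).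
Qed.

Lemma cvg_dotv (a b : T -> V) (a0 b0 : V) :
  a @ F --> a0 -> b @ F --> b0 -> (fun t => dotv (a t) (b t)) @ F --> dotv a0 b0.
Proof.
move=> cvg_a cvg_b; apply: cvg_big => //; first exact: add_continuous.
by move=> i _; apply: cvgM; apply: cvg_entry.
Qed.

Lemma cvg_normv (a : T -> V) (a0 : V) :
  a @ F --> a0 -> (fun t => normv (a t)) @ F --> normv a0.
Proof.
move=> cvg_a; apply: (@cvg_comp _ _ _ (fun t => dotv (a t) (a t)) (@Num.sqrt R) F).
  exact: (cvg_dotv cvg_a cvg_a).
exact: sqrt_continuous.
Qed.

Lemma cvg_normvB (a : T -> V) (a0 : V) :
  a @ F --> a0 -> (fun t => normv (a t - a0)) @ F --> 0.
Proof.
by move=> cvg_a; have := cvg_normv (cvgB cvg_a (cvg_cst a0)); rewrite subrr normv0; exact.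
Qed.

Lemma normvB_cvg (a : T -> V) (a0 : V) :
  (fun t => normv (a t - a0)) @ F --> 0 -> a @ F --> a0.
Proof.
move=> /cvgrPdist_lt cvg_n; apply/cvgrPdist_lt => eps eps0.
apply: filterS (cvg_n eps eps0) => t; rewrite sub0r normrN ger0_norm ?normv_ge0 //.
move=> small; rewrite -[`|_ - _|]/(mx_norm _) mx_normrE.
apply: bigmax_lt => // -[i j] _ /=.
rewrite (ord1 i) !mxE distrC; apply: le_lt_trans small.
by have := normv_entry_le (a t - a0) j; rewrite !mxE.
Qed.

Lemma cvg_dotv_sub_normv_sqr (c : R) (u h : T -> V) (u0 : V) :
  u @ F --> u0 -> h @ F --> (0 : V) ->
  (fun t => dotv (u t) (h t) - c * normv (h t) ^+ 2) @ F --> 0.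
Proof.
move=> cvg_u cvg_h; have cvg_nh := cvg_normv cvg_h.
have := cvgB (cvg_dotv cvg_u cvg_h) (cvgM (cvg_cst c) (cvgM cvg_nh cvg_nh)).
by rewrite dotv0r normv0 mul0r mulr0 subr0; exact.
Qed.

End Limits.

Lemma nbhs_normvB_lt (a : V) t : 0 < t -> nbhs a [set x | normv (x - a) < t].
Proof. by move=> t_gt0; apply: (cvgr_lt _ (cvg_normvB (@cvg_id _ (nbhs a)))). Qed.

End EuclideanNorm.

Lemma subdiff_continuous_sublevel {R : realType} {n : nat} (f : 'rV[R]_n -> \bar R)
    (xb xbs : 'rV[R]_n) (e : R) :
  f xb \is a fin_num -> subdiff_continuous f xb xbs -> 0 < e ->
  exists2 d : R, 0 < d & forall x xs, subdiff f x xs ->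
    normv (x - xb) < d -> normv (xs - xbs) < d -> (f x < f xb + e%:E)%E.
Proof.
move=> fxb_fin sc e_gt0; apply: contrapT => no_radius.
have bad k : exists z, gph f z /\ normv (z.1 - xb) < k.+1%:R^-1 /\
    normv (z.2 - xbs) < k.+1%:R^-1 /\ ~ (f z.1 < f xb + e%:E)%E.
  apply: contrapT => none; apply: no_radius.
  exists k.+1%:R^-1 => // x xs xxs x_near xs_near.
  by apply: contrapT => not_lt; apply: none; exists (x, xs).
have [z zP] := choice bad.
have inv_lt (eps : R) : 0 < eps -> \forall k \near \oo, k.+1%:R^-1 < eps.
  by move=> eps_gt0; exact: (near_infty_natSinv_lt (PosNum eps_gt0)).
have z_gconv : gconv f z (xb, xbs).
  split; first by move=> k; have [] := zP k.
  split; apply: normvB_cvg; apply/cvgrPdist_lt => eps eps_gt0; near=> k;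
    rewrite sub0r normrN ger0_norm ?normv_ge0 //; have [_ [z1_near [z2_near _]]] := zP k.
    by apply: lt_trans z1_near _; near: k; exact: inv_lt.
  by apply: lt_trans z2_near _; near: k; exact: inv_lt.
move: (sc _ z_gconv); rewrite -(fineK fxb_fin) => /fine_cvg /cvgr_lt.
move=> /(_ (fine (f xb) + e)); rewrite ltrDl => /(_ e_gt0) [N _ below].
have [[z_fin _] [_ [_ not_lt]]] := zP N.
apply: not_lt; rewrite -(fineK z_fin) -(fineK fxb_fin) -EFinD lte_fin.
exact: (below N (leqnn N)).
Unshelve. all: by end_near.
Qed.

Section ConeTransfer.
Context {R : realType} {n : nat}.
Local Notation Z := ('rV[R]_n * 'rV[R]_n)%type.
Variables (C1 C2 : (nat -> Z) -> Z -> Prop) (G : set Z).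
Hypothesis conv_agree : forall zk z, G z -> C1 zk z <-> C2 zk z.
Hypothesis C1_eventually_in : forall zk z, G z -> C1 zk z -> \forall k \near \oo, G (zk k).
Hypothesis C2_shift : forall zk z N, C2 zk z -> C2 (fun k => zk (k + N)%N) z.

Lemma tcone_agree z : G z -> tcone C1 z = tcone C2 z.
Proof.
move=> Gz; apply/seteqP; split=> w [zk [tk [conv tk_cvg]]]; exists zk, tk.
  by split=> //; apply/(conv_agree _ Gz).
by split=> //; apply/(conv_agree _ Gz).
Qed.

Lemma lncone_agree_sub z : G z -> lncone C1 z `<=` lncone C2 z.
Proof.
move=> Gz v [zk [vk [conv [normal [cvg1 cvg2]]]]].
have [N _ zk_in] := C1_eventually_in Gz conv.
have zkN_in (k : nat) : G (zk (k + N)%N) by apply: zk_in; rewrite /= leq_addl.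
exists (fun k => zk (k + N)%N), (fun k => vk (k + N)%N); split.
  by apply/C2_shift/(conv_agree _ Gz).
split; last by split; [move: cvg1 | move: cvg2]; rewrite -(cvg_shiftn N).
by move=> k; rewrite /rncone -tcone_agree //; exact: normal.
Qed.

Lemma SCderiv_agree_sub z : G z -> SCderiv C1 z `<=` SCderiv C2 z.
Proof.
move=> Gz L [L_Znn [zk [conv [tcone_Znn [Pk [P [Pk_proj [P_proj Pk_cvg]]]]]]]].
have [N _ zk_in] := C1_eventually_in Gz conv.
have zkN_in (k : nat) : G (zk (k + N)%N) by apply: zk_in; rewrite /= leq_addl.
split=> //; exists (fun k => zk (k + N)%N); split.
  by apply/C2_shift/(conv_agree _ Gz).
split; first by move=> k; rewrite -tcone_agree.
exists (fun k => Pk (k + N)%N), P; split; first by move=> k /=; rewrite -tcone_agree.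
split=> // eps eps_gt0; have [M PkM] := Pk_cvg eps eps_gt0; exists M => k Mk.
by apply: PkM; apply: leq_trans Mk _; rewrite leq_addr.
Qed.

End ConeTransfer.

Section AttentiveConvergence.
Context {R : realType} {n : nat}.
Local Notation Z := ('rV[R]_n * 'rV[R]_n)%type.
Variable f : 'rV[R]_n -> \bar R.

Lemma gconv_shift zk z N : gconv f zk z -> gconv f (fun k => zk (k + N)%N) z.
Proof.
move=> [zk_gph [cvg1 cvg2]]; split=> [k|]; first exact: zk_gph.
by split; [move: cvg1 | move: cvg2]; rewrite -(cvg_shiftn N).
Qed.

Lemma fconv_shift zk z N : fconv f zk z -> fconv f (fun k => zk (k + N)%N) z.
Proof.
move=> [zk_gconv cvgf]; split; first exact: gconv_shift.
by move: cvgf; rewrite -(cvg_shiftn N).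
Qed.

Lemma attentive_constructions_eq (G : set Z) z :
  (forall zk z, G z -> fconv f zk z <-> gconv f zk z) ->
  (forall zk z, G z -> gconv f zk z -> \forall k \near \oo, G (zk k)) ->
  G z ->
  tcone (fconv f) z = tcone (gconv f) z /\
  rncone (fconv f) z = rncone (gconv f) z /\
  lncone (fconv f) z = lncone (gconv f) z /\
  gderiv (fconv f) z = gderiv (gconv f) z /\
  rcoderiv (fconv f) z = rcoderiv (gconv f) z /\
  lcoderiv (fconv f) z = lcoderiv (gconv f) z /\
  SCderiv (fconv f) z = SCderiv (gconv f) z /\
  SCstar (fconv f) z = SCstar (gconv f) z.
Proof.
move=> agree gconv_in Gz.
have fconv_in zk z' : G z' -> fconv f zk z' -> \forall k \near \oo, G (zk k).
  by move=> Gz' [/(gconv_in _ _ Gz')].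
have agree' zk z' : G z' -> gconv f zk z' <-> fconv f zk z'.
  by move=> Gz'; apply: iff_sym; exact: agree.
have T := tcone_agree agree Gz.
have L : lncone (fconv f) z = lncone (gconv f) z.
  by apply/seteqP; split; apply: lncone_agree_sub Gz;
    [exact: agree | exact: fconv_in | exact: gconv_shift
    | exact: agree' | exact: gconv_in | exact: fconv_shift].
have S : SCderiv (fconv f) z = SCderiv (gconv f) z.
  by apply/seteqP; split; apply: SCderiv_agree_sub Gz;
    [exact: agree | exact: fconv_in | exact: gconv_shift
    | exact: agree' | exact: gconv_in | exact: fconv_shift].
by rewrite /gderiv /rcoderiv /lcoderiv /SCstar /rncone T L S.
Qed.

End AttentiveConvergence.

Section Localization.
Context {R : realType} {n : nat}.
Local Notation V := 'rV[R]_n.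
Local Notation Z := (V * V)%type.
Variables (f : V -> \bar R) (xb xbs : V) (e r d : R).
Hypothesis prox_ineq : forall x' x xs, normv (x' - xb) < e -> subdiff f x xs ->
  normv (x - xb) < e -> normv (xs - xbs) < e -> (f x < f xb + e%:E)%E ->
  ((fine (f x) + dotv xs (x' - x) - r / 2 * normv (x' - x) ^+ 2)%:E <= f x')%E.
Hypothesis r_ge0 : 0 <= r.
Hypothesis d_gt0 : 0 < d.
Hypothesis d_le_e : d <= e.
Hypothesis sublevel : forall x xs, subdiff f x xs ->
  normv (x - xb) < d -> normv (xs - xbs) < d -> (f x < f xb + e%:E)%E.

Lemma prox_ineq_near x' x xs : normv (x' - xb) < d -> subdiff f x xs ->
  normv (x - xb) < d -> normv (xs - xbs) < d ->
  ((fine (f x) + dotv xs (x' - x) - r / 2 * normv (x' - x) ^+ 2)%:E <= f x')%E.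
Proof.
move=> x'_near xxs x_near xs_near.
by apply: (prox_ineq _ xxs _ _ (sublevel xxs x_near xs_near)); exact: lt_le_trans d_le_e.
Qed.

Definition gph_near (z : Z) : Prop :=
  gph f z /\ normv (z.1 - xb) < d / 2 /\ normv (z.2 - xbs) < d / 2.

Lemma half_d_lt : d / 2 < d.
Proof. by have := d_gt0; lra. Qed.

Lemma gph_near_prox_regular x xs : gph_near (x, xs) -> prox_regular f x xs.
Proof.
move=> [xxs [/= x_near xs_near]]; split; first by case: xxs.
split=> //; exists (d / 2), r; split; first by have := d_gt0; lra.
split=> // x' x2 xs2 x'_near x2xs2 x2_near xs2_near _.
exact: prox_ineq_near (normvB_lt_half x'_near x_near) x2xs2
  (normvB_lt_half x2_near x_near) (normvB_lt_half xs2_near xs_near).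
Qed.

Lemma gph_near_subdiff_continuous x xs : gph_near (x, xs) -> subdiff_continuous f x xs.
Proof.
move=> [xxs [/= x_near xs_near]] zk [zk_gph [/= cvg1 cvg2]]; rewrite /=.
have [fx_fin _] := xxs.
rewrite -(fineK fx_fin); apply: cvg_EFin; first by apply: nearW => k; case: (zk_gph k).
have x_near' := lt_trans x_near half_d_lt.
have xs_near' := lt_trans xs_near half_d_lt.
have d2_gt0 : 0 < d / 2 by have := d_gt0; lra.
have bounds : \forall k \near \oo,
    fine (f x) + (dotv xs ((zk k).1 - x) - r / 2 * normv ((zk k).1 - x) ^+ 2)
    <= fine (f (zk k).1) <=
    fine (f x) - (dotv (zk k).2 (x - (zk k).1) - r / 2 * normv (x - (zk k).1) ^+ 2).
  near=> k.
  have xk_near : normv ((zk k).1 - xb) < d.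
    apply: normvB_lt_half x_near; near: k; exact: cvgr_lt _ (cvg_normvB cvg1) _ d2_gt0.
  have xsk_near : normv ((zk k).2 - xbs) < d.
    apply: normvB_lt_half xs_near; near: k; exact: cvgr_lt _ (cvg_normvB cvg2) _ d2_gt0.
  have [fxk_fin _] := zk_gph k.
  have := prox_ineq_near xk_near xxs x_near' xs_near'.
  have := prox_ineq_near x_near' (zk_gph k) xk_near xsk_near.
  rewrite -(fineK fx_fin) -(fineK fxk_fin) /= !lee_fin => upper lower; apply/andP; split; lra.
have dx_cvg : (fun k => (zk k).1 - x) @ \oo --> (0 : V) by apply/subr_cvg0.
have dx'_cvg : (fun k => x - (zk k).1) @ \oo --> (0 : V).
  by have := cvgB (cvg_cst x) cvg1; rewrite subrr; exact.
apply: (squeeze_cvgr bounds).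
  rewrite -[X in _ --> X]addr0; apply: cvgD; first exact: cvg_cst.
  exact: cvg_dotv_sub_normv_sqr (cvg_cst xs) dx_cvg.
rewrite -[X in _ --> X]subr0; apply: cvgB; first exact: cvg_cst.
exact: cvg_dotv_sub_normv_sqr cvg2 dx'_cvg.
Unshelve. all: by end_near.
Qed.

Lemma gconv_eventually_gph_near zk z :
  gph_near z -> gconv f zk z -> \forall k \near \oo, gph_near (zk k).
Proof.
case: z => x xs [_ [/= x_near xs_near]] [zk_gph [/= cvg1 cvg2]].
have dist1 : (fun k => normv ((zk k).1 - xb)) @ \oo --> normv (x - xb).
  exact: (cvg_normv (cvgB cvg1 (cvg_cst xb))).
have dist2 : (fun k => normv ((zk k).2 - xbs)) @ \oo --> normv (xs - xbs).
  exact: (cvg_normv (cvgB cvg2 (cvg_cst xbs))).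
near=> k; split; first exact: zk_gph.
by split; near: k; [exact: cvgr_lt _ dist1 _ x_near | exact: cvgr_lt _ dist2 _ xs_near].
Unshelve. all: by end_near.
Qed.

Lemma gph_near_fconvE zk z : gph_near z -> fconv f zk z <-> gconv f zk z.
Proof.
case: z => x xs z_near; split; first by case.
by move=> zk_gconv; split=> //; exact: (gph_near_subdiff_continuous z_near zk_gconv).
Qed.

End Localization.

Theorem lemma3p7 (R : realType) (n : nat) (f : 'rV[R]_n -> \bar R)
    (xb xbs : 'rV[R]_n) :
  (forall x, f x != -oo%E) ->
  lower_semicontinuous f ->
  f xb \is a fin_num ->
  subdiff f xb xbs ->
  prox_regular f xb xbs ->
  subdiff_continuous f xb xbs ->
  exists (U W : set 'rV[R]_n), nbhs xb U /\ nbhs xbs W /\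
    forall x xs, U x -> W xs -> subdiff f x xs ->
      prox_regular f x xs /\ subdiff_continuous f x xs /\
          tcone (fconv f) (x, xs) = tcone (gconv f) (x, xs) /\
          rncone (fconv f) (x, xs) = rncone (gconv f) (x, xs) /\
          lncone (fconv f) (x, xs) = lncone (gconv f) (x, xs) /\
          gderiv (fconv f) (x, xs) = gderiv (gconv f) (x, xs) /\
          rcoderiv (fconv f) (x, xs) = rcoderiv (gconv f) (x, xs) /\
          lcoderiv (fconv f) (x, xs) = lcoderiv (gconv f) (x, xs) /\
          SCderiv (fconv f) (x, xs) = SCderiv (gconv f) (x, xs) /\
          SCstar (fconv f) (x, xs) = SCstar (gconv f) (x, xs).
Proof.
move=> _ _ fxb_fin _ [_ [_ [e [r [e_gt0 [r_ge0 prox_ineq]]]]]] sc.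
have [d0 d0_gt0 sublevel0] := subdiff_continuous_sublevel fxb_fin sc e_gt0.
pose d := Num.min d0 e.
have d_gt0 : 0 < d by rewrite lt_min d0_gt0 e_gt0.
have d_le_e : d <= e by rewrite ge_min lexx orbT.
have sublevel x xs : subdiff f x xs ->
    normv (x - xb) < d -> normv (xs - xbs) < d -> (f x < f xb + e%:E)%E.
  have d_le_d0 : d <= d0 by rewrite ge_min lexx.
  move=> xxs x_near xs_near.
  exact: sublevel0 xxs (lt_le_trans x_near d_le_d0) (lt_le_trans xs_near d_le_d0).
have d2_gt0 : 0 < d / 2 by lra.
exists [set x | normv (x - xb) < d / 2], [set xs | normv (xs - xbs) < d / 2].
split; first exact: nbhs_normvB_lt.
split; first exact: nbhs_normvB_lt.
move=> x xs x_near xs_near xxs.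
have z_near : gph_near f xb xbs d (x, xs) by [].
split; first exact: (gph_near_prox_regular prox_ineq r_ge0 d_gt0 d_le_e sublevel z_near).
split; first exact: (gph_near_subdiff_continuous prox_ineq d_gt0 d_le_e sublevel z_near).
apply: attentive_constructions_eq z_near => zk z.
  exact: (gph_near_fconvE prox_ineq d_gt0 d_le_e sublevel).
exact: gconv_eventually_gph_near.
Qed.
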